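(* Let $m, n, k, l, t, r$ be positive integers such that $t\geq 2$, $k\geq l \geq t+r$ and $\min\{m, n\}\geq k+l-t+2$. Let $i,j\in [\max \{ m, n\}]$ with $i<j$. Let $\mathcal{A}\subseteq\binom{[n]}{k}$ and $\mathcal{B}\subseteq\binom{[m]}{l}$ be cross-$t$-intersecting families. Suppose there exists a $(t+2r)$-element subset $T\subset [\min\{m, n\}]$ such that \[S_{ij}(\mathcal{A})=\left\{A \in \binom{[n]}{k} : |A \cap T| \geq t+r \right\}\quad\text{and}\quad S_{ij}(\mathcal{B})=\left\{B \in \binom{[m]}{l} : |B \cap T| \geq t+r \right\}.\] Then there is a $(t+2r)$-element subset $T'\subset [\min\{m, n\}]$ such that \[\mathcal{A}=\left\{A \in \binom{[n]}{k} : |A \cap T'| \geq t+r \right\}\quad\text{and}\quad\mathcal{B}=\left\{B \in \binom{[m]}{l} : |B \cap T'| \geq t+r \right\}.\]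
   Context: $[n]=\{1,\dots,n\}$ and $\binom{D}{k}$ denotes the family of all $k$-element subsets of a finite set $D$. Families $\mathcal{A},\mathcal{B}$ are cross-$t$-intersecting if $|A\cap B|\ge t$ for all $A\in\mathcal{A}$, $B\in\mathcal{B}$. For a family $\mathcal{F}$ of sets and indices $i,j$, the shift operation is defined for $F\in\mathcal{F}$ by $S_{ij}(F)=(F\setminus\{j\})\cup\{i\}$ if $j\in F$, $i\notin F$ and $(F\setminus\{j\})\cup\{i\}\notin\mathcal{F}$, and $S_{ij}(F)=F$ otherwise; and $S_{ij}(\mathcal{F})=\{S_{ij}(F):F\in\mathcal{F}\}$. *)

From mathcomp Require Import all_boot.
From mathcomp Require Import finmap.
Set Implicit Arguments. Unset Strict Implicit. Unset Printing Implicit Defensive.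
Local Open Scope fset_scope.

Definition ground (n : nat) : {fset nat} := [fset x | x in iota 1 n].

Definition in_binom (n k : nat) (X : {fset nat}) : bool :=
  (X `<=` ground n) && (#|` X| == k).

Definition cross_t_intersecting (t : nat) (A B : {fset {fset nat}}) : Prop :=
  forall X Y, X \in A -> Y \in B -> t <= #|` (X `&` Y)|.

Definition shift_set (i j : nat) (FF : {fset {fset nat}}) (F : {fset nat})
  : {fset nat} :=
  if [&& j \in F, i \notin F & (i |` (F `\ j)) \notin FF]
  then i |` (F `\ j) else F.

Definition shift_family (i j : nat) (FF : {fset {fset nat}}) : {fset {fset nat}} :=
  [fset shift_set i j FF F | F in FF].

Definition is_threshold_family (n k s : nat) (T : {fset nat})
  (FF : {fset {fset nat}}) : Prop :=
  forall X : {fset nat}, X \in FF <-> (in_binom n k X /\ s <= #|` (X `&` T)|).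

(* Suppose some member X of A has fewer than t + r points in T.  Then X was
   moved by the shift, which forces i \in T, j \notin T and makes (i j)X
   critical: a k-set containing i, avoiding j, with exactly t + r points in T,
   whose transposition lies in A.  For two critical k-sets H, H' differing in
   one element there is a critical l-set G meeting both in exactly t points;
   G lies in the shifted family of B but not in B, since it would meet (i j)H
   in only t - 1 points, so (i j)G \in B, and symmetrically (i j)H' \in A.
   Critical sets are connected by such exchanges, so (i j) maps every critical
   set into A (and likewise into B).  Hence every member of A and of B has at
   least t + r points in (i j)T, i.e. A and B lie in the threshold families
   of T' = (i j)T; these are the images of the shifted families, so they have
   the sizes of A and B and equality follows.  If no member of A or B is below
   the threshold, the same cardinality argument gives T' = T. *)
From mathcomp Require Import all_boot.
From mathcomp Require Import finmap.
From mathcomp Require Import zify.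
Set Implicit Arguments. Unset Strict Implicit. Unset Printing Implicit Defensive.
Local Open Scope fset_scope.
Local Open Scope nat_scope.

Definition swapn (i j x : nat) : nat :=
  if x == i then j else if x == j then i else x.

Definition fswap (i j : nat) (X : {fset nat}) : {fset nat} := swapn i j @` X.

Section Transposition.
Variables i j : nat.

Lemma swapnK : involutive (swapn i j).
Proof.
move=> x; rewrite /swapn; case: (eqVneq x i) => [->|xi].
  by rewrite eqxx; case: eqVneq.
by case: (eqVneq x j) => [->|xj]; rewrite ?eqxx // (negPf xi) (negPf xj).
Qed.

Lemma in_fswap X x : (x \in fswap i j X) = (swapn i j x \in X).
Proof.
apply/imfsetP/idP => [[y yX ->]|sxX]; first by rewrite swapnK.
by exists (swapn i j x); rewrite ?swapnK.
Qed.

Lemma fswapK : involutive (fswap i j).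
Proof. by move=> X; apply/fsetP => x; rewrite !in_fswap swapnK. Qed.

Lemma card_fswap X : #|` fswap i j X| = #|` X|.
Proof. exact/card_imfset/(can_inj swapnK). Qed.

Lemma fswap_id X : (i \in X) = (j \in X) -> fswap i j X = X.
Proof.
move=> ijX; apply/fsetP => x; rewrite in_fswap /swapn.
case: (eqVneq x i) => [->|_]; first by rewrite ijX.
by case: (eqVneq x j) => [->|_].
Qed.

Lemma fswap_shift X : j \in X -> i \notin X -> i |` (X `\ j) = fswap i j X.
Proof.
move=> jX iX; apply/fsetP => x; rewrite in_fswap !inE /swapn.
case: (eqVneq x i) => [->|xi] /=; first by rewrite jX.
by case: (eqVneq x j) => [->|_] //=; rewrite (negPf iX).
Qed.

Lemma fswapI X Y : fswap i j (X `&` Y) = fswap i j X `&` fswap i j Y.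
Proof. by apply/fsetP => x; rewrite !inE !in_fswap inE. Qed.

Lemma card_fswapI X Y : #|` fswap i j X `&` Y| = #|` X `&` fswap i j Y|.
Proof. by rewrite -{1}(fswapK Y) -fswapI card_fswap. Qed.

Lemma card_fswapI_moved X Y : j \in X -> i \notin X ->
  #|` fswap i j X `&` Y| + (j \in Y) = #|` X `&` Y| + (i \in Y).
Proof.
move=> jX iX; rewrite -fswap_shift // fsetIUl cardfsU.
rewrite (cardfsD1 j (X `&` Y)) !inE jX /=.
have -> : [fset i] `&` Y `&` ((X `\ j) `&` Y) = fset0.
  by apply/fsetP => x; rewrite !inE; case: eqVneq => [->|]; rewrite ?(negPf iX) ?andbF.
have -> : (X `\ j) `&` Y = (X `&` Y) `\ j by apply/fsetP => x; rewrite !inE andbA.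
rewrite fsetIC fsetI1 cardfs0 subn0.
by case: (i \in Y); rewrite ?cardfs1 ?cardfs0; lia.
Qed.

Lemma fswap_fsubset G X : i \in G -> j \in G -> (fswap i j X `<=` G) = (X `<=` G).
Proof.
move=> iG jG; have swapnG z : (swapn i j z \in G) = (z \in G).
  rewrite /swapn; case: eqVneq => [->|_]; first by rewrite iG jG.
  by case: eqVneq => [->|_]; rewrite ?iG ?jG.
apply/fsubsetP/fsubsetP => sXG z.
  by rewrite -swapnG => zX; apply: sXG; rewrite in_fswap swapnK.
by rewrite in_fswap -swapnG => /sXG.
Qed.

Lemma in_binom_fswap n k X : i \in ground n -> j \in ground n ->
  in_binom n k (fswap i j X) = in_binom n k X.
Proof. by move=> iG jG; rewrite /in_binom fswap_fsubset // card_fswap. Qed.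

End Transposition.

Lemma fswapC i j X : fswap i j X = fswap j i X.
Proof.
apply/fsetP => x; rewrite !in_fswap /swapn.
by case: (eqVneq x i) => [->|//]; case: eqVneq => [->|].
Qed.

Section Shift.
Variables (i j : nat) (FF : {fset {fset nat}}).

Lemma mem_shift_set X : X \in FF -> shift_set i j FF X \in shift_family i j FF.
Proof. by move=> XF; apply: in_imfset. Qed.

Lemma mem_shift_family_fixed X : X \in FF -> ~~ ((j \in X) && (i \notin X)) ->
  X \in shift_family i j FF.
Proof.
move=> /mem_shift_set; rewrite /shift_set.
by case: (j \in X); case: (i \in X).
Qed.

Lemma mem_shift_family_fswap X : X \in FF -> fswap i j X \in FF ->
  X \in shift_family i j FF.
Proof.
move=> /mem_shift_set + sXF; rewrite /shift_set; case: (boolP (j \in X)) => //= jX.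
by case: (boolP (i \in X)) => //= iX; rewrite fswap_shift // sXF.
Qed.

Lemma mem_shift_family_moved X : X \in FF -> j \in X -> i \notin X ->
  fswap i j X \in shift_family i j FF.
Proof.
move=> XF jX iX; case: (boolP (fswap i j X \in FF)) => sXF.
  by apply: mem_shift_family_fswap sXF _; rewrite fswapK.
have := mem_shift_set XF.
by rewrite /shift_set jX iX fswap_shift // sXF.
Qed.

Lemma shift_familyP Y : Y \in shift_family i j FF -> Y \in FF \/ fswap i j Y \in FF.
Proof.
case/imfsetP => X XF ->; rewrite /shift_set.
case: ifP => [/and3P [jX iX _]|_]; last by left.
by right; rewrite fswap_shift // fswapK.
Qed.

Lemma card_shift_family : #|` shift_family i j FF| = #|` FF|.
Proof.
rewrite card_in_imfset //= => X Y XF YF; rewrite /shift_set.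
case: ifP => [/and3P [jX iX nX]|_]; case: ifP => [/and3P [jY iY nY]|_] //.
- by rewrite !fswap_shift // => /(congr1 (fswap i j)); rewrite !fswapK.
- by move=> eXY; move: nX; rewrite eXY YF.
- by move=> eXY; move: nY; rewrite -eXY XF.
Qed.

End Shift.

Lemma threshold_family_fswap n k s i j T FF :
  i \in ground n -> j \in ground n -> is_threshold_family n k s T FF ->
  is_threshold_family n k s (fswap i j T) [fset fswap i j X | X in FF].
Proof.
move=> iG jG thF X; rewrite -card_fswapI -(in_binom_fswap k X iG jG).
rewrite -thF; split => [/imfsetP [Y YF ->]|XF]; first by rewrite fswapK.
by apply/imfsetP; exists (fswap i j X); rewrite ?fswapK.
Qed.

Lemma threshold_family_sub n k s T (FF GG : {fset {fset nat}}) :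
  is_threshold_family n k s T GG -> #|` GG| <= #|` FF| ->
  (forall X, X \in FF -> in_binom n k X /\ s <= #|` X `&` T|) ->
  is_threshold_family n k s T FF.
Proof.
move=> thG cardGF FG; have FsubG : FF `<=` GG by apply/fsubsetP => X /FG /thG.
suff -> : FF = GG by [].
by apply/eqP; rewrite eqEfcard FsubG.
Qed.

Lemma shift_family_threshold n k s i j T (FF : {fset {fset nat}}) :
  (forall X, X \in FF -> in_binom n k X) ->
  is_threshold_family n k s T (shift_family i j FF) ->
  (forall X, X \in FF -> s <= #|` X `&` T|) ->
  is_threshold_family n k s T FF.
Proof.
move=> FFn thS FFs; apply: threshold_family_sub thS _ _.
  by rewrite card_shift_family.
by move=> X XF; split; [apply: FFn | apply: FFs].
Qed.

Lemma shift_family_threshold_fswap n k s i j T (FF : {fset {fset nat}}) :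
  i \in ground n -> j \in ground n ->
  (forall X, X \in FF -> in_binom n k X) ->
  is_threshold_family n k s T (shift_family i j FF) ->
  (forall X, X \in FF -> s <= #|` fswap i j X `&` T|) ->
  is_threshold_family n k s (fswap i j T) FF.
Proof.
move=> iG jG FFn thS FFs; apply: threshold_family_sub (threshold_family_fswap iG jG thS) _ _.
  by rewrite -(card_shift_family i j FF) leq_imfset_card.
by move=> X XF; split; [apply: FFn | rewrite -card_fswapI; apply: FFs].
Qed.

Lemma exists_fsubset_card (K : choiceType) (X : {fset K}) s : s <= #|` X| ->
  exists2 Y : {fset K}, Y `<=` X & #|` Y| = s.
Proof.
move=> sX; exists [fset x in take s X].
  by apply/fsubsetP => x; rewrite inE => /mem_take.
rewrite card_fseq undup_id ?size_take_min; first exact/minn_idPl.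
exact/take_uniq/fset_uniq.
Qed.

Lemma in_ground n x : (x \in ground n) = (1 <= x <= n).
Proof. by rewrite /ground inE mem_iota; lia. Qed.

Lemma card_ground n : #|` ground n| = n.
Proof. by rewrite /ground card_fseq undup_id ?size_iota ?iota_uniq. Qed.

Lemma card_common_trace k s (H H' T : {fset nat}) :
  #|` H| = k -> #|` H'| = k -> #|` H `&` T| = s -> #|` H' `&` T| = s ->
  #|` H `|` H'| <= k.+1 -> s.-1 <= #|` H `&` H' `&` T|.
Proof.
move=> cH cH' cHT cH'T cHH'.
have -> : H `&` H' `&` T = (H `&` T) `&` (H' `&` T).
  by apply/fsetP => x; rewrite !inE; case: (x \in T); rewrite ?andbT ?andbF.
have traceU : H `&` T `|` H' `&` T `<=` H `&` T `|` (H' `\` H).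
  by apply/fsubsetP => x; rewrite !inE; case: (x \in H); case: (x \in T); case: (x \in H').
have := fsubset_leq_card traceU; have := cardfsUI (H `&` T) (H' `\` H).
have := cardfsUI (H `&` T) (H' `&` T); have := cardfsUI H H'; have := cardfsID H H'.
rewrite fsetIC; lia.
Qed.

Lemma card_trim_meet (T D Q Y : {fset nat}) :
  D `<=` T `&` Y -> [disjoint Q & Y] ->
  #|` (T `\` D `|` Q) `&` Y| = #|` T `&` Y| - #|` D|.
Proof.
move=> DTY /eqP QY; rewrite fsetIUl QY fsetU0 -cardfsDS //.
by congr #|` _|; apply/fsetP => x; rewrite !inE; case: (x \in D).
Qed.

Definition critical (n k i j s : nat) (T H : {fset nat}) : Prop :=
  [/\ in_binom n k H, i \in H, j \notin H & #|` H `&` T| = s].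

Lemma exists_critical_meeting_pair m l k t r i j (T H H' : {fset nat}) :
  T `<=` ground m -> #|` T| = t + 2 * r -> i \in T -> j \notin T ->
  2 <= t -> t + r <= l -> k + l - t + 2 <= m ->
  #|` H| = k -> #|` H'| = k -> i \in H -> i \in H' ->
  #|` H `&` T| = t + r -> #|` H' `&` T| = t + r -> #|` H `|` H'| <= k.+1 ->
  exists G, [/\ critical m l i j (t + r) T G, #|` G `&` H| = t & #|` G `&` H'| = t].
Proof.
move=> Tm cT iT jT t2 trl klm cH cH' iH iH' cHT cH'T cHH'.
have cI := card_common_trace cH cH' cHT cH'T cHH'.
have [D DI cD] : exists2 D, D `<=` H `&` H' `&` T `\ i & #|` D| = r.
  apply: exists_fsubset_card; move: cI.
  by rewrite [#|` H `&` H' `&` T|](cardfsD1 i) !inE iH iH' iT; lia.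
move: DI; rewrite fsubsetD1 => /andP [DI iD].
have [DHT DH'T DT] : [/\ D `<=` T `&` H, D `<=` T `&` H' & D `<=` T `&` T].
  split; apply/fsubsetP => x /(fsubsetP DI); rewrite !inE;
  by case/andP => /andP [xH xH'] xT; rewrite xT ?xH ?xH'.
pose Z := j |` (T `|` (H `|` H')).
have cZ : #|` Z| <= k + r + 2.
  have := cardfsUI T (H `|` H'); have := fsubset_leq_card (fsetIS T (fsubsetUl H H')).
  rewrite /Z cardfsU1 fsetIC cHT; have := leq_b1 (j \notin T `|` (H `|` H')); lia.
have [Q] : exists2 Q, Q `<=` ground m `\` Z & #|` Q| = l - (t + r).
  apply: exists_fsubset_card; rewrite cardfsD card_ground.
  by have := fsubset_leq_card (fsubsetIr (ground m) Z); lia.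
rewrite fsubsetD => /andP [Qm]; rewrite /Z !fdisjointXU fdisjointX1.
case/and4P => jQ QT QH QH' cQ.
(* G keeps T except r common points of H, H', T other than i, and is padded
   with points outside T, H, H' and j. *)
exists (T `\` D `|` Q); split; last 2 first.
- by rewrite card_trim_meet // fsetIC cHT cD addnK.
- by rewrite card_trim_meet // fsetIC cH'T cD addnK.
split.
- apply/andP; split; first by rewrite fsubUset Qm (fsubset_trans (fsubsetDl _ _)).
  have /eqP GQ : [disjoint T `\` D & Q].
    by rewrite fdisjoint_sym (fdisjointWr (fsubsetDl T D) QT).
  rewrite cardfsU GQ cardfs0 subn0 cardfsDS ?cT ?cD ?cQ;
    last exact: fsubset_trans DT (fsubsetIl _ _).
  by apply/eqP; move: trl; clear; lia.
- by rewrite in_fsetU in_fsetD iT iD.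
- by rewrite in_fsetU in_fsetD (negPf jT) (negPf jQ) andbF.
- by rewrite card_trim_meet // fsetIid cT cD; move: trl; clear; lia.
Qed.

Lemma cross_t_intersecting_sym t (A B : {fset {fset nat}}) :
  cross_t_intersecting t A B -> cross_t_intersecting t B A.
Proof. by move=> AB X Y XB YA; rewrite fsetIC; apply: AB. Qed.

Lemma cross_critical_fswap m l t s i j (A B : {fset {fset nat}}) (T H G : {fset nat}) :
  cross_t_intersecting t A B -> is_threshold_family m l s T (shift_family i j B) ->
  fswap i j H \in A -> i \in H -> j \notin H ->
  critical m l i j s T G -> #|` G `&` H| = t -> fswap i j G \in B.
Proof.
(* G \in B is impossible: G would meet (i j)H in only t - 1 points. *)
move=> AB thB sHA iH jH [Gm iG jG GT] GH.
have /shift_familyP [GB|//] : G \in shift_family i j B by apply/thB; rewrite GT.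
have := card_fswapI_moved G iH jH; rewrite -fswapC iG (negPf jG) (fsetIC H) GH.
by have := AB _ _ sHA GB; lia.
Qed.

Lemma exists_notin_of_card_eq (K : choiceType) (P0 P1 : {fset K}) x :
  #|` P0| = #|` P1| -> x \in P1 -> x \notin P0 -> exists2 y, y \in P0 & y \notin P1.
Proof.
move=> cP xP1 xP0; apply/fsubsetPn/negP => P01.
have /eqP P01e : P0 == P1 by rewrite eqEfcard P01 cP /=.
by rewrite P01e xP1 in xP0.
Qed.

Lemma exists_exchange_mate (H0 H1 T : {fset nat}) x :
  #|` H0| = #|` H1| -> #|` H0 `&` T| = #|` H1 `&` T| -> x \in H1 -> x \notin H0 ->
  exists y, [/\ y \in H0, y \notin H1 & (y \in T) = (x \in T)].
Proof.
move=> cH cHT xH1 xH0; case: (boolP (x \in T)) => xT.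
  have xH1T : x \in H1 `&` T by rewrite inE xH1 xT.
  have xH0T : x \notin H0 `&` T by rewrite inE (negPf xH0).
  have [y] := exists_notin_of_card_eq cHT xH1T xH0T.
  by rewrite !inE => /andP [yH0 yT]; rewrite yT andbT => yH1; exists y.
have cHT' : #|` H0 `\` T| = #|` H1 `\` T| by move: (cardfsID T H0) (cardfsID T H1); lia.
have xH1T : x \in H1 `\` T by rewrite inE xH1 xT.
have xH0T : x \notin H0 `\` T by rewrite inE (negPf xH0) andbF.
have [y] := exists_notin_of_card_eq cHT' xH1T xH0T.
by rewrite !inE => /andP [yT yH0]; rewrite yT /= => yH1; exists y; rewrite (negPf yT).
Qed.

Lemma critical_exchange n k i j s (T H0 H1 : {fset nat}) x :
  critical n k i j s T H0 -> critical n k i j s T H1 -> x \in H1 -> x \notin H0 ->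
  exists H, [/\ critical n k i j s T H, #|` H `\` H0| < #|` H1 `\` H0|
              & #|` H `|` H1| <= k.+1].
Proof.
move=> [H0b iH0 jH0 cH0T] [H1b iH1 jH1 cH1T] xH1 xH0.
case/andP: (H0b) (H1b) => [H0n /eqP cH0] /andP [H1n /eqP cH1].
have [y [yH0 yH1 yxT]] :=
  exists_exchange_mate (etrans cH0 (esym cH1)) (etrans cH0T (esym cH1T)) xH1 xH0.
exists (y |` (H1 `\ x)); split.
- split.
  + rewrite fswap_shift // in_binom_fswap //.
      exact: (fsubsetP H0n).
    exact: (fsubsetP H1n).
  + by rewrite !inE iH1 andbT orbC; apply/orP; left; apply: contraNneq xH0 => <-.
  + by rewrite !inE (negPf jH1) andbF orbF; apply: contraNneq jH0 => ->.
  + have := card_fswapI_moved T xH1 yH1; rewrite -fswap_shift // yxT cH1T.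
    by move/eqP; rewrite eqn_add2r => /eqP.
- have -> : (y |` (H1 `\ x)) `\` H0 = (H1 `\` H0) `\ x.
    apply/fsetP => z; rewrite !inE; case: (eqVneq z y) => [->|_] /=.
      by rewrite yH0 /= andbF.
    by case: (z \in H0); case: (z \in H1); case: (z == x).
  by apply/fproper_ltn_card/fproperD1; rewrite inE xH0 xH1.
- have : (y |` (H1 `\ x)) `|` H1 `<=` y |` H1.
    apply/fsubsetP => z; rewrite !inE.
    by case: (z == y); case: (z \in H1); rewrite ?andbF ?orbT.
  by move/fsubset_leq_card; rewrite cardfsU1 yH1 cH1.
Qed.

Lemma critical_connected n k i j s T (P : {fset nat} -> Prop) (H0 H1 : {fset nat}) :
  (forall H H', critical n k i j s T H -> critical n k i j s T H' ->
     #|` H `|` H'| <= k.+1 -> P H -> P H') ->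
  critical n k i j s T H0 -> critical n k i j s T H1 -> P H0 -> P H1.
Proof.
move=> Pstep cH0 + PH0; have [d] := ubnP #|` H1 `\` H0|.
elim: d H1 => // d IH H1; rewrite ltnS => dH1 cH1.
case: (boolP (H1 `<=` H0)) => [H10|/fsubsetPn [x xH1 xH0]].
  suff -> : H1 = H0 by [].
  case: cH0 cH1 => /andP [_ /eqP cH0] _ _ _ [/andP [_ /eqP cH1] _ _ _].
  by apply/eqP; rewrite eqEfcard H10 cH0 cH1 /=.
have [H [cH ltH HH1]] := critical_exchange cH0 cH1 xH1 xH0.
exact: Pstep cH cH1 HH1 (IH H (leq_trans ltH dH1) cH).
Qed.

Lemma fswap_trace_ge n k s i j T (FF : {fset {fset nat}}) Z :
  i \in T -> j \notin T -> is_threshold_family n k s T (shift_family i j FF) ->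
  Z \in FF -> (critical n k i j s T Z -> fswap i j Z \in FF) ->
  s <= #|` fswap i j Z `&` T|.
Proof.
move=> iT jT thS ZF critZ.
case: (boolP ((j \in Z) && (i \notin Z))) => [/andP [jZ iZ]|fixZ].
  by have /thS [] := mem_shift_family_moved ZF jZ iZ.
have /thS [Zb sZT] := mem_shift_family_fixed ZF fixZ.
case: (boolP ((i \in Z) && (j \notin Z))) => [/andP [iZ jZ]|fixZ'].
  have := card_fswapI_moved T iZ jZ; rewrite -fswapC iT (negPf jT).
  case: (eqVneq #|` Z `&` T| s) => [eZT|neZT]; last by lia.
  have /critZ sZF : critical n k i j s T Z by [].
  have ZF' : fswap i j (fswap i j Z) \in FF by rewrite fswapK.
  by have /thS [] := mem_shift_family_fswap sZF ZF'.
rewrite fswap_id //; move: fixZ fixZ'.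
by case: (i \in Z); case: (j \in Z).
Qed.

Lemma low_member_critical n k s i j T (FF : {fset {fset nat}}) X :
  is_threshold_family n k s T (shift_family i j FF) ->
  X \in FF -> #|` X `&` T| < s ->
  [/\ i \in T, j \notin T, j \in X & critical n k i j s T (fswap i j X)].
Proof.
move=> thS XF XT.
have [jX iX] : j \in X /\ i \notin X.
  case: (boolP ((j \in X) && (i \notin X))) => [/andP [] //|fixX].
  by have /thS [_] := mem_shift_family_fixed XF fixX; lia.
have ij : i != j by apply: contraNneq iX => ->.
have /thS [sXb sXT] := mem_shift_family_moved XF jX iX.
have := card_fswapI_moved T jX iX.
case: (boolP (i \in T)) => iT; case: (boolP (j \in T)) => jT; try lia.
move=> e; split=> //; split=> //.
- by rewrite in_fswap /swapn eqxx.
- by rewrite in_fswap /swapn eq_sym (negPf ij) eqxx.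
- lia.
Qed.

Section CriticalSwaps.
Variables (n k m l t r i j : nat) (A B : {fset {fset nat}}) (T : {fset nat}).
Hypotheses (AB : cross_t_intersecting t A B)
  (thA : is_threshold_family n k (t + r) T (shift_family i j A))
  (thB : is_threshold_family m l (t + r) T (shift_family i j B))
  (Tn : T `<=` ground n) (Tm : T `<=` ground m) (cT : #|` T| = t + 2 * r)
  (iT : i \in T) (jT : j \notin T) (t2 : 2 <= t) (trk : t + r <= k) (trl : t + r <= l)
  (kln : k + l - t + 2 <= n) (klm : k + l - t + 2 <= m).

Lemma critical_fswap_step H H' :
  critical n k i j (t + r) T H -> critical n k i j (t + r) T H' ->
  #|` H `|` H'| <= k.+1 -> fswap i j H \in A -> fswap i j H' \in A.
Proof.
move=> [/andP [_ /eqP cH] iH jH cHT] cH'crit HH' sHA.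
case: (cH'crit) => /andP [_ /eqP cH'] iH' jH' cH'T.
have [G [cG GH GH']] :=
  exists_critical_meeting_pair Tm cT iT jT t2 trl klm cH cH' iH iH' cHT cH'T HH'.
have sGB := cross_critical_fswap AB thB sHA iH jH cG GH.
apply: cross_critical_fswap (cross_t_intersecting_sym AB) thA sGB _ _ cH'crit _.
- by case: cG.
- by case: cG.
- by rewrite fsetIC.
Qed.

Lemma critical_fswap_mem H0 H :
  critical n k i j (t + r) T H0 -> fswap i j H0 \in A ->
  critical n k i j (t + r) T H -> fswap i j H \in A.
Proof. by move=> cH0 sH0A cH; apply: (critical_connected critical_fswap_step cH0 cH). Qed.

Lemma critical_fswap_mem_dual H0 Z :
  critical n k i j (t + r) T H0 -> fswap i j H0 \in A ->
  critical m l i j (t + r) T Z -> fswap i j Z \in B.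
Proof.
move=> cH0 sH0A cZ; case: (cZ) => /andP [_ /eqP cZl] iZ jZ cZT.
have lkn : l + k - t + 2 <= n by rewrite (addnC l).
have cZZ : #|` Z `|` Z| <= l.+1 by rewrite fsetUid cZl.
have [H [cH HZ _]] :=
  exists_critical_meeting_pair Tn cT iT jT t2 trk lkn cZl cZl iZ iZ cZT cZT cZZ.
have sHA := critical_fswap_mem cH0 sH0A cH.
case: cH => _ iH jH _.
by apply: cross_critical_fswap AB thB sHA iH jH cZ _; rewrite fsetIC.
Qed.

End CriticalSwaps.

Lemma low_member_threshold_fswap n k m l t r i j (A B : {fset {fset nat}}) (T X : {fset nat}) :
  (forall X, X \in A -> in_binom n k X) ->
  (forall Y, Y \in B -> in_binom m l Y) ->
  cross_t_intersecting t A B ->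
  is_threshold_family n k (t + r) T (shift_family i j A) ->
  is_threshold_family m l (t + r) T (shift_family i j B) ->
  T `<=` ground n -> T `<=` ground m -> #|` T| = t + 2 * r -> 2 <= t ->
  t + r <= k -> t + r <= l -> k + l - t + 2 <= n -> k + l - t + 2 <= m ->
  X \in A -> #|` X `&` T| < t + r ->
  [/\ i \in T, j \in ground n, j \in ground m,
      is_threshold_family n k (t + r) (fswap i j T) A &
      is_threshold_family m l (t + r) (fswap i j T) B].
Proof.
move=> An Bm AB thA thB Tn Tm cT t2 trk trl kln klm XA XT.
have [iT jT jX cX] := low_member_critical thA XA XT.
have ij : i != j by apply: contraNneq jT => <-.
have sXA : fswap i j (fswap i j X) \in A by rewrite fswapK.
have swapA := critical_fswap_mem AB thA thB Tm cT iT jT t2 trl klm cX sXA.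
have swapB := critical_fswap_mem_dual AB thA thB Tn Tm cT iT jT t2 trk trl kln klm cX sXA.
have jn : j \in ground n by case/andP: (An X XA) => /fsubsetP Xn _; apply: Xn.
have jm : j \in ground m.
  case: (cX) => /andP [_ /eqP cXk] iX _ cXT.
  have cXX : #|` fswap i j X `|` fswap i j X| <= k.+1 by rewrite fsetUid cXk.
  have [G [cG _ _]] :=
    exists_critical_meeting_pair Tm cT iT jT t2 trl klm cXk cXk iX iX cXT cXT cXX.
  have /Bm /andP [/fsubsetP Gm _] := swapB G cG.
  by apply: Gm; case: cG => _ iG _ _; rewrite in_fswap /swapn eq_sym (negPf ij) eqxx.
split => //; apply: shift_family_threshold_fswap => //.
- exact: (fsubsetP Tn).
- by move=> Z ZA; apply: fswap_trace_ge thA ZA (swapA Z).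
- exact: (fsubsetP Tm).
- by move=> Z ZB; apply: fswap_trace_ge thB ZB (swapB Z).
Qed.

Lemma ground_fsubset m n : m <= n -> ground m `<=` ground n.
Proof. by move=> mn; apply/fsubsetP => x; rewrite !in_ground => /andP [-> /leq_trans ->]. Qed.

Theorem theorem4p5 (m n k l t r : nat) (i j : nat)
  (A B : {fset {fset nat}}) (T : {fset nat}) :
  0 < m -> 0 < n -> 0 < k -> 0 < l -> 0 < t -> 0 < r ->
  2 <= t -> l <= k -> t + r <= l ->
  k + l - t + 2 <= minn m n ->
  1 <= i -> i < j -> j <= maxn m n ->
  (forall X, X \in A -> in_binom n k X) ->
  (forall Y, Y \in B -> in_binom m l Y) ->
  cross_t_intersecting t A B ->
  T `<=` ground (minn m n) -> #|` T| = (t + 2 * r)%N ->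
  is_threshold_family n k (t + r) T (shift_family i j A) ->
  is_threshold_family m l (t + r) T (shift_family i j B) ->
  exists T' : {fset nat},
    [/\ T' `<=` ground (minn m n), #|` T'| = (t + 2 * r)%N,
        is_threshold_family n k (t + r) T' A &
        is_threshold_family m l (t + r) T' B].
Proof.
move=> _ _ _ _ _ _ t2 lk trl klmn _ _ _ An Bm AB Tmn cT thA thB.
have Tm := fsubset_trans Tmn (ground_fsubset (geq_minl m n)).
have Tn := fsubset_trans Tmn (ground_fsubset (geq_minr m n)).
have trk : t + r <= k := leq_trans trl lk.
have [klm kln] : k + l - t + 2 <= m /\ k + l - t + 2 <= n.
  by move: klmn; rewrite leq_min => /andP.
have fswapT_fits : i \in T -> j \in ground n -> j \in ground m ->
    fswap i j T `<=` ground (minn m n) /\ #|` fswap i j T| = t + 2 * r.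
  move=> iT jn jm; rewrite card_fswap; split => //.
  rewrite fswap_fsubset //; first exact: (fsubsetP Tmn).
  by move: jn jm; rewrite !in_ground leq_min => /andP [-> ->] /andP [_ ->].
case: (boolP (has (fun X => #|` X `&` T| < t + r) A)) => [/hasP [X XA XT]|/hasPn highA].
  have [iT jn jm thA' thB'] := low_member_threshold_fswap An Bm AB thA thB Tn Tm cT t2
    trk trl kln klm XA XT.
  by have [? ?] := fswapT_fits iT jn jm; exists (fswap i j T).
case: (boolP (has (fun Y => #|` Y `&` T| < t + r) B)) => [/hasP [Y YB YT]|/hasPn highB].
  have [lkm lkn] : l + k - t + 2 <= m /\ l + k - t + 2 <= n by rewrite (addnC l).
  have [iT jm jn thB' thA'] := low_member_threshold_fswap Bm An
    (cross_t_intersecting_sym AB) thB thA Tm Tn cT t2 trl trk lkm lkn YB YT.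
  by have [? ?] := fswapT_fits iT jn jm; exists (fswap i j T).
exists T; split => //.
- by apply: shift_family_threshold => // X /highA; rewrite -leqNgt.
- by apply: shift_family_threshold => // Y /highB; rewrite -leqNgt.
Qed.
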